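(* Let $-\infty\le a<b\le\infty$, let $f,g$ be differentiable on $(a,b)$ with $g'\ne0$ on $(a,b)$, and suppose $\lim_{x\to a^+}f(x)=\lim_{x\to a^+}g(x)=0$. Let $H_{f,g}=\frac{f'}{g'}g-f$ and $H_{f,g}(b^-)=\lim_{x\to b^-}H_{f,g}(x)\in[-\infty,\infty]$. (A) Suppose there is $c\in(a,b)$ such that $f'/g'$ is strictly increasing on $(a,c)$ and strictly decreasing on $(c,b)$. Then: (i) if $\operatorname{sgn}(g')\cdot\operatorname{sgn}(H_{f,g}(b^-))\ge 0$, $f/g$ is strictly increasing on $(a,b)$; (ii) if $\operatorname{sgn}(g')\cdot\operatorname{sgn}(H_{f,g}(b^-))<0$, there is a unique $x_a\in(a,b)$ such that $f/g$ is strictly increasing on $(a,x_a)$ and strictly decreasing on $(x_a,b)$. (B) Suppose there is $c\in(a,b)$ such that $f'/g'$ is strictly decreasing on $(a,c)$ and strictly increasing on $(c,b)$. Then: (i) if $\operatorname{sgn}(g')\cdot\operatorname{sgn}(H_{f,g}(b^-))\le 0$, $f/g$ is strictly decreasing on $(a,b)$; (ii) if $\operatorname{sgn}(g')\cdot\operatorname{sgn}(H_{f,g}(b^-))>0$, there is a unique $x_a\in(a,b)$ such that $f/g$ is strictly decreasing on $(a,x_a)$ and strictly increasing on $(x_a,b)$.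
   Context: $H_{f,g}(x)=\frac{f'(x)}{g'(x)}g(x)-f(x)$ for $x\in(a,b)$. Here $\operatorname{sgn}(g')$ is the (constant) sign of $g'$ on $(a,b)$, and $\operatorname{sgn}(\pm\infty)=\pm1$. *)

From Stdlib Require Import Reals Lra.
Open Scope R_scope.

Inductive ER : Type := Fin (r : R) | PInf | NInf.

Definition ER_lt (x y : ER) : Prop :=
  match x, y with
  | Fin u, Fin v => u < v
  | NInf, Fin _ | NInf, PInf | Fin _, PInf => True
  | _, _ => False
  end.

Definition in_oo (u v : ER) (x : R) : Prop := ER_lt u (Fin x) /\ ER_lt (Fin x) v.

Definition sgnR (x : R) : R :=
  if Rlt_dec 0 x then 1 else if Rlt_dec x 0 then -1 else 0.

Definition sgnER (x : ER) : R :=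
  match x with Fin r => sgnR r | PInf => 1 | NInf => -1 end.

Definition strict_incr_on (u v : ER) (h : R -> R) : Prop :=
  forall x y, in_oo u v x -> in_oo u v y -> x < y -> h x < h y.

Definition strict_decr_on (u v : ER) (h : R -> R) : Prop :=
  forall x y, in_oo u v x -> in_oo u v y -> x < y -> h y < h x.

Definition lim_right (h : R -> R) (a : ER) (l : R) : Prop :=
  forall eps, 0 < eps ->
    exists u : R, ER_lt a (Fin u) /\
      forall x, ER_lt a (Fin x) -> x < u -> Rabs (h x - l) < eps.

Definition lim_left (h : R -> R) (b : ER) (L : ER) : Prop :=
  match L with
  | Fin l => forall eps, 0 < eps ->
      exists u : R, ER_lt (Fin u) b /\
        forall x, u < x -> ER_lt (Fin x) b -> Rabs (h x - l) < eps
  | PInf => forall M : R,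
      exists u : R, ER_lt (Fin u) b /\
        forall x, u < x -> ER_lt (Fin x) b -> M < h x
  | NInf => forall M : R,
      exists u : R, ER_lt (Fin u) b /\
        forall x, u < x -> ER_lt (Fin x) b -> h x < M
  end.

Definition Hfg (f g f' g' : R -> R) : R -> R :=
  fun x => f' x / g' x * g x - f x.

From Stdlib Require Import Reals Lra FunctionalExtensionality.
Open Scope R_scope.

(* Write r = f'/g' and H = H_{f,g}.  By the quotient rule (f/g)' = g' H / g^2,
   so the monotonicity of f/g is governed by the sign of H.  Replacing (f, g) by
   (-f, -g) makes g' > 0, and replacing f by -f turns (B) into (A); so assume
   g' > 0 and the shape of (A).  Then g increases from g(a+) = 0, hence g > 0.
   The Cauchy mean value theorem f(y) - f(x) = r(t) (g(y) - g(x)), combined with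
   f(a+) = g(a+) = 0, gives H > 0 where r increases, and shows that H strictly
   decreases where r decreases.  So f/g increases on (a, c], and on (c, b) the
   decreasing function H either stays positive (when H(b-) >= 0) or changes sign
   exactly once, at the unique turning point of f/g. *)

Lemma ER_lt_Fin_le_r a x y : ER_lt a (Fin x) -> x <= y -> ER_lt a (Fin y).
Proof. destruct a; simpl; auto; lra. Qed.

Lemma ER_lt_Fin_le_l b x y : ER_lt (Fin y) b -> x <= y -> ER_lt (Fin x) b.
Proof. destruct b; simpl; auto; lra. Qed.

Lemma ER_lt_Fin_min a x y : ER_lt a (Fin x) -> ER_lt a (Fin y) -> ER_lt a (Fin (Rmin x y)).
Proof. unfold Rmin; destruct (Rle_dec x y); auto. Qed.

Lemma ER_lt_Fin_max b x y : ER_lt (Fin x) b -> ER_lt (Fin y) b -> ER_lt (Fin (Rmax x y)) b.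
Proof. unfold Rmax; destruct (Rle_dec x y); auto. Qed.

Lemma ER_lt_exists_below a u : ER_lt a (Fin u) -> exists t, ER_lt a (Fin t) /\ t < u.
Proof.
  destruct a as [r| |]; simpl; intros; try tauto.
  - exists ((r + u) / 2); lra.
  - exists (u - 1); split; auto; lra.
Qed.

Lemma ER_lt_exists_above b u : ER_lt (Fin u) b -> exists t, u < t /\ ER_lt (Fin t) b.
Proof.
  destruct b as [r| |]; simpl; intros; try tauto.
  - exists ((r + u) / 2); lra.
  - exists (u + 1); split; auto; lra.
Qed.

Lemma ER_lt_exists_between a b : ER_lt a b -> exists p, in_oo a b p.
Proof.
  destruct a as [r| |], b as [s| |]; simpl; intros; try tauto.
  - exists ((r + s) / 2); split; simpl; lra.
  - exists (r + 1); split; simpl; auto; lra.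
  - exists (s - 1); split; simpl; auto; lra.
  - exists 0; split; simpl; auto.
Qed.

Lemma in_oo_between a b x y t : in_oo a b x -> in_oo a b y -> x <= t <= y -> in_oo a b t.
Proof.
  intros [hax _] [_ hyb] ht; split.
  - apply (ER_lt_Fin_le_r a x); [exact hax | lra].
  - apply (ER_lt_Fin_le_l b t y); [exact hyb | lra].
Qed.

Lemma in_oo_above a b c x : in_oo a b c -> c < x -> ER_lt (Fin x) b -> in_oo a b x.
Proof. intros [hac _] hcx hxb; split; auto; apply (ER_lt_Fin_le_r a c); [exact hac | lra]. Qed.

Lemma in_oo_below a b c x : in_oo a b c -> ER_lt a (Fin x) -> x < c -> in_oo a b x.
Proof. intros [_ hcb] hax hxc; split; auto; apply (ER_lt_Fin_le_l b x c); [exact hcb | lra]. Qed.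

Lemma strict_incr_on_opp u v q :
  strict_incr_on u v (fun x => - q x) <-> strict_decr_on u v q.
Proof.
  unfold strict_incr_on, strict_decr_on.
  split; intros hq x y hx hy hxy; specialize (hq x y hx hy hxy); lra.
Qed.

Lemma strict_decr_on_opp u v q :
  strict_decr_on u v (fun x => - q x) <-> strict_incr_on u v q.
Proof.
  unfold strict_incr_on, strict_decr_on.
  split; intros hq x y hx hy hxy; specialize (hq x y hx hy hxy); lra.
Qed.

Definition peak (a b : ER) (q : R -> R) : Prop :=
  exists xa, in_oo a b xa /\
    strict_incr_on a (Fin xa) q /\ strict_decr_on (Fin xa) b q /\
    forall y, in_oo a b y ->
      strict_incr_on a (Fin y) q -> strict_decr_on (Fin y) b q -> y = xa.

Definition valley (a b : ER) (q : R -> R) : Prop :=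
  exists xa, in_oo a b xa /\
    strict_decr_on a (Fin xa) q /\ strict_incr_on (Fin xa) b q /\
    forall y, in_oo a b y ->
      strict_decr_on a (Fin y) q -> strict_incr_on (Fin y) b q -> y = xa.

Lemma valley_of_peak_opp a b q : peak a b (fun x => - q x) -> valley a b q.
Proof.
  intros [m [hm [hinc [hdec huniq]]]].
  exists m; split; [exact hm | split; [|split]].
  - now apply strict_incr_on_opp.
  - now apply strict_decr_on_opp.
  - intros y hy hd hi; apply huniq; [exact hy | |].
    + now apply strict_incr_on_opp.
    + now apply strict_decr_on_opp.
Qed.

Lemma strict_incr_decr_overlap a b q x y : in_oo a b x -> in_oo a b y -> y < x ->
  strict_incr_on a (Fin x) q -> strict_decr_on (Fin y) b q -> False.
Proof.
  intros [_ hxb] [hay _] hyx hinc hdec.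
  assert (hp : forall p, y < p < x -> in_oo a (Fin x) p /\ in_oo (Fin y) b p).
  { intros p hp; split; split; simpl; try lra.
    - apply (ER_lt_Fin_le_r a y); [exact hay | lra].
    - apply (ER_lt_Fin_le_l b p x); [exact hxb | lra]. }
  destruct (hp ((2 * y + x) / 3)) as [h1 h1']; [lra|].
  destruct (hp ((y + 2 * x) / 3)) as [h2 h2']; [lra|].
  specialize (hinc _ _ h1 h2 ltac:(lra)); specialize (hdec _ _ h1' h2' ltac:(lra)); lra.
Qed.

Lemma turning_point_unique a b q x y : in_oo a b x -> in_oo a b y ->
  strict_incr_on a (Fin x) q -> strict_decr_on (Fin x) b q ->
  strict_incr_on a (Fin y) q -> strict_decr_on (Fin y) b q -> y = x.
Proof.
  intros hx hy hix hdx hiy hdy.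
  destruct (Rtotal_order y x) as [h|[h|h]]; auto; exfalso.
  - exact (strict_incr_decr_overlap a b q x y hx hy h hix hdy).
  - exact (strict_incr_decr_overlap a b q y x hy hx h hiy hdx).
Qed.

Lemma sgnR_pos x : 0 < x -> sgnR x = 1.
Proof. intros; unfold sgnR; destruct (Rlt_dec 0 x); lra. Qed.

Lemma sgnR_neg x : x < 0 -> sgnR x = -1.
Proof. intros; unfold sgnR; destruct (Rlt_dec 0 x); [lra|]; destruct (Rlt_dec x 0); lra. Qed.

Lemma sgnR_nonneg_inv x : 0 <= sgnR x -> 0 <= x.
Proof. unfold sgnR; destruct (Rlt_dec 0 x); [lra|]; destruct (Rlt_dec x 0); lra. Qed.

Lemma sgnR_neg_inv x : sgnR x < 0 -> x < 0.
Proof. unfold sgnR; destruct (Rlt_dec 0 x); [lra|]; destruct (Rlt_dec x 0); lra. Qed.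

Definition negER (L : ER) : ER :=
  match L with Fin r => Fin (- r) | PInf => NInf | NInf => PInf end.

Lemma sgnER_negER L : sgnER (negER L) = - sgnER L.
Proof.
  destruct L as [r| |]; simpl; try lra.
  destruct (Rtotal_order r 0) as [h|[h|h]].
  - rewrite (sgnR_neg r h), (sgnR_pos (- r)); lra.
  - subst; rewrite Ropp_0; unfold sgnR; destruct (Rlt_dec 0 0); [lra|]; destruct (Rlt_dec 0 0); lra.
  - rewrite (sgnR_pos r h), (sgnR_neg (- r)); lra.
Qed.

Lemma lim_right_opp h a l : lim_right h a l -> lim_right (fun x => - h x) a (- l).
Proof.
  intros hl eps heps; destruct (hl eps heps) as [u [hu hx]].
  exists u; split; [exact hu|]; intros x hax hxu.
  replace (- h x - - l) with (- (h x - l)) by ring; rewrite Rabs_Ropp; auto.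
Qed.

Lemma lim_right_lincomb h1 h2 a k : lim_right h1 a 0 -> lim_right h2 a 0 ->
  lim_right (fun x => h1 x + k * h2 x) a 0.
Proof.
  intros l1 l2 eps heps.
  set (e := eps / (1 + Rabs k)).
  assert (hk := Rabs_pos k).
  assert (he : 0 < e) by (apply Rdiv_lt_0_compat; lra).
  assert (Ee : e * (1 + Rabs k) = eps) by (unfold e; field; lra).
  destruct (l1 e he) as [u1 [hu1 h1x]], (l2 e he) as [u2 [hu2 h2x]].
  exists (Rmin u1 u2); split; [now apply ER_lt_Fin_min|].
  intros x hax hxu; pose proof (Rmin_l u1 u2); pose proof (Rmin_r u1 u2).
  specialize (h1x x hax ltac:(lra)); specialize (h2x x hax ltac:(lra)).
  rewrite Rminus_0_r in *.
  pose proof (Rabs_triang (h1 x) (k * h2 x)); rewrite Rabs_mult in *.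
  assert (Rabs k * Rabs (h2 x) <= Rabs k * e) by (apply Rmult_le_compat_l; lra).
  lra.
Qed.

Lemma lim_right_ge h a l z K : ER_lt a (Fin z) -> lim_right h a l ->
  (forall t, ER_lt a (Fin t) -> t < z -> K <= h t) -> K <= l.
Proof.
  intros haz hl hK; apply Rnot_lt_le; intro hlt.
  destruct (hl (K - l) ltac:(lra)) as [u [hu hx]].
  destruct (ER_lt_exists_below a (Rmin u z) (ER_lt_Fin_min a u z hu haz)) as [t [hat ht]].
  pose proof (Rmin_l u z); pose proof (Rmin_r u z).
  specialize (hx t hat ltac:(lra)); specialize (hK t hat ltac:(lra)).
  apply Rabs_def2 in hx; lra.
Qed.

Lemma lim_left_opp h b L : lim_left h b L -> lim_left (fun x => - h x) b (negER L).
Proof.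
  destruct L as [l| |]; simpl; intros hl.
  - intros eps heps; destruct (hl eps heps) as [u [hu hx]].
    exists u; split; [exact hu|]; intros x hux hxb.
    replace (- h x - - l) with (- (h x - l)) by ring; rewrite Rabs_Ropp; auto.
  - intros M; destruct (hl (- M)) as [u [hu hx]].
    exists u; split; [exact hu|]; intros x hux hxb; specialize (hx x hux hxb); lra.
  - intros M; destruct (hl (- M)) as [u [hu hx]].
    exists u; split; [exact hu|]; intros x hux hxb; specialize (hx x hux hxb); lra.
Qed.

Lemma lim_left_pos_of_strict_decr h c b L :
  strict_decr_on (Fin c) b h -> lim_left h b L -> 0 <= sgnER L ->
  forall x, in_oo (Fin c) b x -> 0 < h x.
Proof.
  intros hdec hl hs x [hcx hxb]; simpl in hcx; apply Rnot_le_lt; intro hx0.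
  assert (hdec' : forall y z, x <= y -> y < z -> ER_lt (Fin z) b -> h z < h y).
  { intros y z hxy hyz hzb; apply hdec; auto; split; simpl; try lra; [|exact hzb].
    apply (ER_lt_Fin_le_l b y z); [exact hzb | lra]. }
  destruct L as [l| |]; simpl in hl, hs.
  - apply sgnR_nonneg_inv in hs.
    destruct (ER_lt_exists_above b x hxb) as [x' [hxx' hx'b]].
    pose proof (hdec' x x' ltac:(lra) hxx' hx'b).
    destruct (hl (- h x') ltac:(lra)) as [u [hu hz]].
    destruct (ER_lt_exists_above b (Rmax u x') (ER_lt_Fin_max b u x' hu hx'b)) as [z [hz1 hzb]].
    pose proof (Rmax_l u x'); pose proof (Rmax_r u x').
    specialize (hz z ltac:(lra) hzb); apply Rabs_def2 in hz.
    pose proof (hdec' x' z ltac:(lra) ltac:(lra) hzb); lra.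
  - destruct (hl (h x)) as [u [hu hz]].
    destruct (ER_lt_exists_above b (Rmax u x) (ER_lt_Fin_max b u x hu hxb)) as [z [hz1 hzb]].
    pose proof (Rmax_l u x); pose proof (Rmax_r u x).
    specialize (hz z ltac:(lra) hzb); pose proof (hdec' x z ltac:(lra) ltac:(lra) hzb); lra.
  - lra.
Qed.

Lemma lim_left_neg_eventually h b L : lim_left h b L -> sgnER L < 0 ->
  exists u, ER_lt (Fin u) b /\ forall z, u < z -> ER_lt (Fin z) b -> h z < 0.
Proof.
  destruct L as [l| |]; simpl; intros hl hs.
  - apply sgnR_neg_inv in hs.
    destruct (hl (- l) ltac:(lra)) as [u [hu hz]].
    exists u; split; [exact hu|]; intros z h1 h2.
    specialize (hz z h1 h2); apply Rabs_def2 in hz; lra.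
  - lra.
  - exact (hl 0).
Qed.

Lemma strict_decr_sign_change h c b :
  strict_decr_on (Fin c) b h -> ER_lt (Fin c) b ->
  (exists u, ER_lt (Fin u) b /\ forall z, u < z -> ER_lt (Fin z) b -> h z < 0) ->
  exists m, c <= m /\ ER_lt (Fin m) b /\
    (forall x, c < x < m -> 0 < h x) /\ (forall x, in_oo (Fin m) b x -> h x < 0).
Proof.
  intros hdec hcb [u [hub hu]].
  (* [m] is the supremum of the points where [h] is still positive *)
  set (E := fun x => x = c \/ (in_oo (Fin c) b x /\ 0 < h x)).
  assert (hE : is_upper_bound E (Rmax u c)).
  { intros x [->|[[hcx hxb] hx]]; [apply Rmax_r|].
    apply Rnot_lt_le; intro hlt; pose proof (Rmax_l u c).
    specialize (hu x ltac:(lra) hxb); lra. }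
  destruct (completeness E (ex_intro _ _ hE) (ex_intro _ c (or_introl eq_refl))) as [m [hm1 hm2]].
  assert (hcm : c <= m) by (apply hm1; left; reflexivity).
  assert (hmb : ER_lt (Fin m) b)
    by (apply (ER_lt_Fin_le_l b m (Rmax u c)); [now apply ER_lt_Fin_max | now apply hm2]).
  exists m; split; [exact hcm | split; [exact hmb | split]].
  - intros x [hcx hxm]; apply Rnot_le_lt; intro hx.
    assert (x_ub : is_upper_bound E x).
    { intros e [->|[he he0]]; [lra|].
      apply Rnot_lt_le; intro hxe.
      assert (hxin : in_oo (Fin c) b x).
      { split; simpl; [lra|]. apply (ER_lt_Fin_le_l b x m); [exact hmb | lra]. }
      specialize (hdec x e hxin he hxe); lra. }
    specialize (hm2 x x_ub); lra.
  - intros x [hmx hxb]; simpl in hmx; apply Rnot_le_lt; intro hx.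
    set (y := (m + x) / 2).
    assert (hyin : in_oo (Fin c) b y).
    { split; simpl; [unfold y; lra|]. apply (ER_lt_Fin_le_l b y x); [exact hxb | unfold y; lra]. }
    assert (h x < h y) by (apply hdec; [exact hyin | split; simpl; auto; lra | unfold y; lra]).
    assert (E y) by (right; split; [exact hyin | lra]).
    specialize (hm1 y ltac:(assumption)); unfold y in hm1; lra.
Qed.

Lemma derivable_pt_lim_pos_locally f x l : derivable_pt_lim f x l -> 0 < l ->
  exists d, 0 < d /\ forall h, 0 < h < d -> f x < f (x + h) /\ f (x - h) < f x.
Proof.
  intros hd hl; destruct (hd (l / 2) ltac:(lra)) as [del hdel].
  exists del; split; [apply cond_pos|]; intros h hh.
  assert (hp := hdel h ltac:(lra) ltac:(rewrite Rabs_right; lra)).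
  assert (hm := hdel (- h) ltac:(lra) ltac:(rewrite Rabs_left; lra)).
  apply Rabs_def2 in hp; apply Rabs_def2 in hm.
  replace (x + - h) with (x - h) in hm by ring.
  assert (Ep : f (x + h) - f x = (f (x + h) - f x) / h * h) by (field; lra).
  assert (Em : f (x - h) - f x = (f (x - h) - f x) / - h * - h) by (field; lra).
  split; nra.
Qed.

(* Darboux: at a maximum point of [f] on [[u, v]], [f'] can be neither positive
   nor negative. *)
Lemma derivative_no_sign_change f f' u v : u < v ->
  (forall x, u <= x <= v -> derivable_pt_lim f x (f' x)) ->
  (forall x, u <= x <= v -> f' x <> 0) -> 0 < f' u -> f' v < 0 -> False.
Proof.
  intros huv hd hn hu hv.
  destruct (continuity_ab_maj f u v ltac:(lra)) as [M [hM hMuv]].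
  { intros x hx; apply derivable_continuous_pt; exists (f' x); apply hd, hx. }
  destruct (Rlt_or_le 0 (f' M)) as [hpos|hle].
  - assert (M <> v) by (intros ->; lra).
    destruct (derivable_pt_lim_pos_locally f M (f' M) (hd M hMuv) hpos) as [d [hd0 hloc]].
    set (h := Rmin (d / 2) ((v - M) / 2)).
    assert (0 < h < d /\ h <= (v - M) / 2)
      by (unfold h, Rmin; destruct (Rle_dec (d / 2) ((v - M) / 2)); lra).
    destruct (hloc h ltac:(lra)); specialize (hM (M + h) ltac:(lra)); lra.
  - assert (hneg : f' M < 0) by (specialize (hn M hMuv); lra).
    assert (M <> u) by (intros ->; lra).
    destruct (derivable_pt_lim_pos_locally (fun x => - f x) M (- f' M)
                (derivable_pt_lim_opp _ _ _ (hd M hMuv)) ltac:(lra)) as [d [hd0 hloc]].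
    set (h := Rmin (d / 2) ((M - u) / 2)).
    assert (0 < h < d /\ h <= (M - u) / 2)
      by (unfold h, Rmin; destruct (Rle_dec (d / 2) ((M - u) / 2)); lra).
    destruct (hloc h ltac:(lra)); specialize (hM (M - h) ltac:(lra)); lra.
Qed.

Lemma derivative_pos_everywhere a b g g' p :
  (forall x, in_oo a b x -> derivable_pt_lim g x (g' x)) ->
  (forall x, in_oo a b x -> g' x <> 0) ->
  in_oo a b p -> 0 < g' p -> forall x, in_oo a b x -> 0 < g' x.
Proof.
  intros hd hn hp hgp x hx; apply Rnot_le_lt; intro hle.
  assert (hgx : g' x < 0) by (specialize (hn x hx); lra).
  destruct (Rtotal_order p x) as [hpx|[->|hxp]]; [| lra |].
  - apply (derivative_no_sign_change g g' p x hpx); auto;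
      intros t ht; [apply hd | apply hn]; exact (in_oo_between a b p x t hp hx ht).
  - apply (derivative_no_sign_change (fun t => - g t) (fun t => - g' t) x p hxp); try lra.
    + intros t ht; apply derivable_pt_lim_opp, hd; exact (in_oo_between a b x p t hx hp ht).
    + intros t ht; specialize (hn t (in_oo_between a b x p t hx hp ht)); lra.
Qed.

Lemma cauchy_mvt f g f' g' x y : x < y ->
  (forall t, x <= t <= y -> derivable_pt_lim f t (f' t)) ->
  (forall t, x <= t <= y -> derivable_pt_lim g t (g' t)) ->
  exists t, x < t < y /\ f' t * (g y - g x) = g' t * (f y - f x).
Proof.
  intros hxy hf hg.
  set (k1 := g y - g x); set (k2 := f y - f x).
  destruct (MVT_cor2 (fun t => k1 * f t - k2 * g t) (fun t => k1 * f' t - k2 * g' t) x y hxy)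
    as [t [Et ht]].
  { intros t ht; apply (derivable_pt_lim_minus (fun t => k1 * f t) (fun t => k2 * g t));
      apply derivable_pt_lim_scal; auto. }
  exists t; split; [exact ht|].
  assert (E : (k1 * f' t - k2 * g' t) * (y - x) = 0) by (rewrite <- Et; unfold k1, k2; ring).
  apply Rmult_integral in E; destruct E; lra.
Qed.

Lemma strict_incr_of_derivative_pos u v q dq e :
  (forall x, in_oo u v x -> derivable_pt_lim q x (dq x)) ->
  (forall x, in_oo u v x -> x <> e -> 0 < dq x) ->
  strict_incr_on u v q.
Proof.
  intros hd hpos.
  assert (avoiding_e : forall x y, in_oo u v x -> in_oo u v y -> x < y ->
            ~ (x < e < y) -> q x < q y).
  { intros x y hx hy hxy he.
    destruct (MVT_cor2 q dq x y hxy) as [t [Et ht]].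
    { intros t ht; apply hd; exact (in_oo_between u v x y t hx hy ht). }
    assert (0 < dq t).
    { apply hpos; [apply (in_oo_between u v x y); auto; lra | intros ->; tauto]. }
    nra. }
  intros x y hx hy hxy.
  destruct (Rlt_dec x e) as [hxe|hxe]; [destruct (Rlt_dec e y) as [hey|hey]|].
  - assert (in_oo u v e) by (apply (in_oo_between u v x y); auto; lra).
    apply Rlt_trans with (q e); apply avoiding_e; auto; lra.
  - apply avoiding_e; auto; lra.
  - apply avoiding_e; auto; lra.
Qed.

Section PositiveDerivative.

Variables (a b : ER) (f g f' g' : R -> R).
Hypothesis hf : forall x, in_oo a b x -> derivable_pt_lim f x (f' x).
Hypothesis hg : forall x, in_oo a b x -> derivable_pt_lim g x (g' x).
Hypothesis hg'pos : forall x, in_oo a b x -> 0 < g' x.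
Hypothesis hfa : lim_right f a 0.
Hypothesis hga : lim_right g a 0.

Lemma g_strict_incr x y : in_oo a b x -> in_oo a b y -> x < y -> g x < g y.
Proof.
  intros hx hy hxy; destruct (MVT_cor2 g g' x y hxy) as [t [Et ht]].
  { intros t ht; apply hg; exact (in_oo_between a b x y t hx hy ht). }
  assert (0 < g' t) by (apply hg'pos; apply (in_oo_between a b x y); auto; lra).
  nra.
Qed.

Lemma g_pos x : in_oo a b x -> 0 < g x.
Proof.
  intros hx; destruct (ER_lt_exists_below a x (proj1 hx)) as [z [haz hzx]].
  assert (hz : in_oo a b z) by exact (in_oo_below a b x z hx haz hzx).
  pose proof (g_strict_incr z x hz hx hzx).
  enough (- g z <= - 0) by lra.
  apply (lim_right_ge (fun t => - g t) a (- 0) z (- g z) haz (lim_right_opp g a 0 hga)).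
  intros t hat htz; apply Ropp_le_contravar; left; apply g_strict_incr; auto.
  exact (in_oo_below a b z t hz hat htz).
Qed.

Lemma cauchy_ratio x y : in_oo a b x -> in_oo a b y -> x < y ->
  exists t, x < t < y /\ f y - f x = f' t / g' t * (g y - g x).
Proof.
  intros hx hy hxy; destruct (cauchy_mvt f g f' g' x y hxy) as [t [ht E]];
    try (intros t ht; (apply hf || apply hg); exact (in_oo_between a b x y t hx hy ht)).
  assert (hpos : 0 < g' t) by (apply hg'pos; apply (in_oo_between a b x y); auto; lra).
  exists t; split; [exact ht|].
  apply (Rmult_eq_reg_l (g' t)); [rewrite <- E; field|]; lra.
Qed.

(* Letting [t -> a+] in [f x - f t < r x (g x - g z) + r z (g z - g t)],
   obtained from two applications of [cauchy_ratio] on [t < z < x]. *)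
Lemma ratio_incr_bound c z x : strict_incr_on a (Fin c) (fun t => f' t / g' t) ->
  in_oo a b z -> in_oo a b x -> z < x -> x < c ->
  f x - f' x / g' x * (g x - g z) - f' z / g' z * g z <= 0.
Proof.
  intros hr hz hx hzx hxc.
  assert (in_ac : forall t, in_oo a b t -> t < c -> in_oo a (Fin c) t)
    by (intros t [hat _] htc; split; [exact hat | exact htc]).
  destruct (cauchy_ratio z x hz hx hzx) as [t1 [ht1 E1]].
  assert (ht1in : in_oo a b t1) by (apply (in_oo_between a b z x); auto; lra).
  assert (r1 : f' t1 / g' t1 < f' x / g' x)
    by (apply hr; [apply in_ac; auto; lra | apply in_ac; auto | lra]).
  apply (lim_right_ge (fun t => f t + - (f' z / g' z) * g t) a 0 z);
    [exact (proj1 hz) | now apply lim_right_lincomb |].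
  intros t hat htz.
  assert (ht : in_oo a b t) by exact (in_oo_below a b z t hz hat htz).
  destruct (cauchy_ratio t z ht hz htz) as [t2 [ht2 E2]].
  assert (ht2in : in_oo a b t2) by (apply (in_oo_between a b t z); auto; lra).
  assert (r2 : f' t2 / g' t2 < f' z / g' z)
    by (apply hr; [apply in_ac; auto; lra | apply in_ac; auto; lra | lra]).
  pose proof (g_strict_incr z x hz hx hzx); pose proof (g_strict_incr t z ht hz htz).
  nra.
Qed.

Lemma Hfg_pos_left c x : strict_incr_on a (Fin c) (fun t => f' t / g' t) ->
  in_oo a b x -> x < c -> 0 < Hfg f g f' g' x.
Proof.
  intros hr hx hxc; destruct (ER_lt_exists_below a x (proj1 hx)) as [z [haz hzx]].
  assert (hz : in_oo a b z) by exact (in_oo_below a b x z hx haz hzx).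
  pose proof (ratio_incr_bound c z x hr hz hx hzx hxc).
  assert (f' z / g' z < f' x / g' x)
    by (apply hr; [split; simpl; auto; lra | split; [apply hx | exact hxc] | exact hzx]).
  pose proof (g_pos z hz); unfold Hfg; nra.
Qed.

Lemma Hfg_strict_decr_right c : in_oo a b c ->
  strict_decr_on (Fin c) b (fun t => f' t / g' t) -> strict_decr_on (Fin c) b (Hfg f g f' g').
Proof.
  intros hc hr x y hx hy hxy.
  assert (hxin : in_oo a b x) by exact (in_oo_above a b c x hc (proj1 hx) (proj2 hx)).
  assert (hyin : in_oo a b y) by exact (in_oo_above a b c y hc (proj1 hy) (proj2 hy)).
  destruct (cauchy_ratio x y hxin hyin hxy) as [t [ht E]].
  assert (htin : in_oo (Fin c) b t) by (apply (in_oo_between (Fin c) b x y); auto; lra).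
  assert (f' t / g' t < f' x / g' x) by (apply hr; auto; lra).
  assert (f' y / g' y < f' t / g' t) by (apply hr; auto; lra).
  pose proof (g_strict_incr x y hxin hyin hxy); pose proof (g_pos x hxin).
  unfold Hfg; nra.
Qed.

Lemma derivable_ratio x : in_oo a b x ->
  derivable_pt_lim (fun t => f t / g t) x (g' x * Hfg f g f' g' x / (g x)²).
Proof.
  intros hx; pose proof (g_pos x hx); pose proof (hg'pos x hx).
  replace (g' x * Hfg f g f' g' x / (g x)²) with ((f' x * g x - g' x * f x) / (g x)²)
    by (unfold Hfg, Rsqr; field; lra).
  apply (derivable_pt_lim_div f g); auto; lra.
Qed.

Lemma ratio_strict_incr_on u v e : (forall x, in_oo u v x -> in_oo a b x) ->
  (forall x, in_oo u v x -> x <> e -> 0 < Hfg f g f' g' x) ->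
  strict_incr_on u v (fun x => f x / g x).
Proof.
  intros huv hH.
  apply (strict_incr_of_derivative_pos u v _ (fun x => g' x * Hfg f g f' g' x / (g x)²) e).
  - intros x hx; exact (derivable_ratio x (huv x hx)).
  - intros x hx hxe; pose proof (hg'pos x (huv x hx)); pose proof (hH x hx hxe).
    pose proof (Rsqr_pos_lt (g x) ltac:(pose proof (g_pos x (huv x hx)); lra)).
    apply Rdiv_lt_0_compat; [apply Rmult_lt_0_compat|]; assumption.
Qed.

Lemma ratio_strict_decr_on u v : (forall x, in_oo u v x -> in_oo a b x) ->
  (forall x, in_oo u v x -> Hfg f g f' g' x < 0) ->
  strict_decr_on u v (fun x => f x / g x).
Proof.
  intros huv hH; apply strict_incr_on_opp.
  apply (strict_incr_of_derivative_pos u v _ (fun x => - (g' x * Hfg f g f' g' x / (g x)²)) 0).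
  - intros x hx; exact (derivable_pt_lim_opp _ _ _ (derivable_ratio x (huv x hx))).
  - intros x hx _; pose proof (hg'pos x (huv x hx)); pose proof (hH x hx).
    pose proof (Rsqr_pos_lt (g x) ltac:(pose proof (g_pos x (huv x hx)); lra)).
    assert (0 < g' x * - Hfg f g f' g' x / (g x)²)
      by (apply Rdiv_lt_0_compat; [apply Rmult_lt_0_compat|]; lra).
    unfold Rdiv in *; lra.
Qed.

Lemma ratio_shape_pos c L : in_oo a b c ->
  strict_incr_on a (Fin c) (fun x => f' x / g' x) ->
  strict_decr_on (Fin c) b (fun x => f' x / g' x) ->
  lim_left (Hfg f g f' g') b L ->
  (0 <= sgnER L -> strict_incr_on a b (fun x => f x / g x)) /\
  (sgnER L < 0 -> peak a b (fun x => f x / g x)).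
Proof.
  intros hc hi hd hL.
  pose proof (Hfg_strict_decr_right c hc hd) as hH.
  split; intros hs.
  - pose proof (lim_left_pos_of_strict_decr _ _ _ _ hH hL hs) as hright.
    apply (ratio_strict_incr_on a b c); [tauto|].
    intros x hx hxc; destruct (Rtotal_order x c) as [h|[h|h]]; [| congruence |].
    + exact (Hfg_pos_left c x hi hx h).
    + apply hright; split; [exact h | apply hx].
  - destruct (strict_decr_sign_change _ _ _ hH (proj2 hc) (lim_left_neg_eventually _ _ _ hL hs))
      as [m [hcm [hmb [hpos hneg]]]].
    assert (hm : in_oo a b m) by (split; [apply (ER_lt_Fin_le_r a c); [apply hc | lra] | exact hmb]).
    assert (hinc : strict_incr_on a (Fin m) (fun x => f x / g x)).
    { apply (ratio_strict_incr_on a (Fin m) c).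
      - intros x [hax hxm]; exact (in_oo_below a b m x hm hax hxm).
      - intros x [hax hxm] hxc; simpl in hxm.
        destruct (Rtotal_order x c) as [h|[h|h]]; [| congruence | apply hpos; lra].
        exact (Hfg_pos_left c x hi (in_oo_below a b m x hm hax hxm) h). }
    assert (hdec : strict_decr_on (Fin m) b (fun x => f x / g x)).
    { apply ratio_strict_decr_on; [|exact hneg].
      intros x [hmx hxb]; exact (in_oo_above a b m x hm hmx hxb). }
    exists m; split; [exact hm | split; [exact hinc | split; [exact hdec |]]].
    intros y hy hiy hdy; exact (turning_point_unique a b _ m y hm hy hinc hdec hiy hdy).
Qed.

End PositiveDerivative.

Lemma Rdiv_opp_opp u v : - u / - v = u / v.
Proof. now rewrite Rdiv_opp_r, Rdiv_opp_l, Ropp_involutive. Qed.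

Lemma Hfg_opp_l f g f' g' : Hfg (fun x => - f x) g (fun x => - f' x) g' = fun x => - Hfg f g f' g' x.
Proof. extensionality x; unfold Hfg; rewrite Rdiv_opp_l; ring. Qed.

Lemma Hfg_opp f g f' g' :
  Hfg (fun x => - f x) (fun x => - g x) (fun x => - f' x) (fun x => - g' x) =
  fun x => - Hfg f g f' g' x.
Proof. extensionality x; unfold Hfg; rewrite Rdiv_opp_opp; ring. Qed.

Lemma ratio_shapeA a b f g f' g' L : ER_lt a b ->
  (forall x, in_oo a b x -> derivable_pt_lim f x (f' x)) ->
  (forall x, in_oo a b x -> derivable_pt_lim g x (g' x)) ->
  (forall x, in_oo a b x -> g' x <> 0) ->
  lim_right f a 0 -> lim_right g a 0 -> lim_left (Hfg f g f' g') b L ->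
  (exists c, in_oo a b c /\
     strict_incr_on a (Fin c) (fun x => f' x / g' x) /\
     strict_decr_on (Fin c) b (fun x => f' x / g' x)) ->
  ((forall x, in_oo a b x -> sgnR (g' x) * sgnER L >= 0) ->
     strict_incr_on a b (fun x => f x / g x)) /\
  ((forall x, in_oo a b x -> sgnR (g' x) * sgnER L < 0) ->
     peak a b (fun x => f x / g x)).
Proof.
  intros hab hf hg hg'0 hfa hga hL [c [hc [hi hd]]].
  destruct (ER_lt_exists_between a b hab) as [p hp].
  destruct (Rlt_or_le 0 (g' p)) as [hgp|hgp].
  - pose proof (derivative_pos_everywhere a b g g' p hg hg'0 hp hgp) as hpos.
    destruct (ratio_shape_pos a b f g f' g' hf hg hpos hfa hga c L hc hi hd hL) as [hA1 hA2].
    split; intros hs; specialize (hs p hp); rewrite (sgnR_pos _ hgp) in hs;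
      [apply hA1 | apply hA2]; lra.
  (* Passing to (-f, -g) makes g' positive, keeps f/g and f'/g', and negates H_{f,g}. *)
  - assert (hgp' : g' p < 0) by (specialize (hg'0 p hp); lra).
    assert (hpos : forall x, in_oo a b x -> 0 < - g' x).
    { apply (derivative_pos_everywhere a b (fun x => - g x) (fun x => - g' x) p); auto; try lra.
      - intros x hx; apply derivable_pt_lim_opp, hg, hx.
      - intros x hx; specialize (hg'0 x hx); lra. }
    assert (Er : (fun x => - f' x / - g' x) = fun x => f' x / g' x)
      by (extensionality x; apply Rdiv_opp_opp).
    assert (Eq : (fun x => - f x / - g x) = fun x => f x / g x)
      by (extensionality x; apply Rdiv_opp_opp).
    pose proof (lim_right_opp f a 0 hfa) as hfa'; pose proof (lim_right_opp g a 0 hga) as hga'.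
    rewrite Ropp_0 in hfa', hga'.
    destruct (ratio_shape_pos a b (fun x => - f x) (fun x => - g x) (fun x => - f' x) (fun x => - g' x))
      with c (negER L) as [hA1 hA2]; auto.
    + intros x hx; apply derivable_pt_lim_opp, hf, hx.
    + intros x hx; apply derivable_pt_lim_opp, hg, hx.
    + rewrite Er; exact hi.
    + rewrite Er; exact hd.
    + rewrite Hfg_opp; exact (lim_left_opp _ _ _ hL).
    + rewrite Eq, sgnER_negER in *.
      split; intros hs; specialize (hs p hp); rewrite (sgnR_neg _ hgp') in hs;
        [apply hA1 | apply hA2]; lra.
Qed.

Lemma ratio_shapeB a b f g f' g' L : ER_lt a b ->
  (forall x, in_oo a b x -> derivable_pt_lim f x (f' x)) ->
  (forall x, in_oo a b x -> derivable_pt_lim g x (g' x)) ->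
  (forall x, in_oo a b x -> g' x <> 0) ->
  lim_right f a 0 -> lim_right g a 0 -> lim_left (Hfg f g f' g') b L ->
  (exists c, in_oo a b c /\
     strict_decr_on a (Fin c) (fun x => f' x / g' x) /\
     strict_incr_on (Fin c) b (fun x => f' x / g' x)) ->
  ((forall x, in_oo a b x -> sgnR (g' x) * sgnER L <= 0) ->
     strict_decr_on a b (fun x => f x / g x)) /\
  ((forall x, in_oo a b x -> sgnR (g' x) * sgnER L > 0) ->
     valley a b (fun x => f x / g x)).
Proof.
  intros hab hf hg hg'0 hfa hga hL [c [hc [hd hi]]].
  assert (Er : (fun x => - f' x / g' x) = fun x => - (f' x / g' x))
    by (extensionality x; apply Rdiv_opp_l).
  pose proof (lim_right_opp f a 0 hfa) as hfa'; rewrite Ropp_0 in hfa'.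
  destruct (ratio_shapeA a b (fun x => - f x) g (fun x => - f' x) g' (negER L)) as [hA1 hA2]; auto.
  - intros x hx; apply derivable_pt_lim_opp, hf, hx.
  - rewrite Hfg_opp_l; exact (lim_left_opp _ _ _ hL).
  - exists c; rewrite Er; split; [exact hc | split].
    + now apply strict_incr_on_opp.
    + now apply strict_decr_on_opp.
  - assert (Eq : (fun x => - f x / g x) = fun x => - (f x / g x))
      by (extensionality x; apply Rdiv_opp_l).
    rewrite Eq, sgnER_negER in *.
    split; intros hs.
    + apply strict_incr_on_opp, hA1; intros x hx; specialize (hs x hx); lra.
    + apply valley_of_peak_opp, hA2; intros x hx; specialize (hs x hx); lra.
Qed.

Theorem mainTheorem3
  (a b : ER) (hab : ER_lt a b)
  (f g f' g' : R -> R)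
  (hf : forall x, in_oo a b x -> derivable_pt_lim f x (f' x))
  (hg : forall x, in_oo a b x -> derivable_pt_lim g x (g' x))
  (hg'0 : forall x, in_oo a b x -> g' x <> 0)
  (hfa : lim_right f a 0) (hga : lim_right g a 0)
  (L : ER) (hL : lim_left (Hfg f g f' g') b L) :
  ((exists c, in_oo a b c /\
      strict_incr_on a (Fin c) (fun x => f' x / g' x) /\
      strict_decr_on (Fin c) b (fun x => f' x / g' x)) ->
    ((forall x, in_oo a b x -> sgnR (g' x) * sgnER L >= 0) ->
       strict_incr_on a b (fun x => f x / g x)) /\
    ((forall x, in_oo a b x -> sgnR (g' x) * sgnER L < 0) ->
       exists xa, in_oo a b xa /\
         strict_incr_on a (Fin xa) (fun x => f x / g x) /\
         strict_decr_on (Fin xa) b (fun x => f x / g x) /\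
         forall y, in_oo a b y ->
           strict_incr_on a (Fin y) (fun x => f x / g x) ->
           strict_decr_on (Fin y) b (fun x => f x / g x) -> y = xa))
  /\
  ((exists c, in_oo a b c /\
      strict_decr_on a (Fin c) (fun x => f' x / g' x) /\
      strict_incr_on (Fin c) b (fun x => f' x / g' x)) ->
    ((forall x, in_oo a b x -> sgnR (g' x) * sgnER L <= 0) ->
       strict_decr_on a b (fun x => f x / g x)) /\
    ((forall x, in_oo a b x -> sgnR (g' x) * sgnER L > 0) ->
       exists xa, in_oo a b xa /\
         strict_decr_on a (Fin xa) (fun x => f x / g x) /\
         strict_incr_on (Fin xa) b (fun x => f x / g x) /\
         forall y, in_oo a b y ->
           strict_decr_on a (Fin y) (fun x => f x / g x) ->
           strict_incr_on (Fin y) b (fun x => f x / g x) -> y = xa)).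
Proof.
  split.
  - exact (ratio_shapeA a b f g f' g' L hab hf hg hg'0 hfa hga hL).
  - exact (ratio_shapeB a b f g f' g' L hab hf hg hg'0 hfa hga hL).
Qed.
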